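(* Let $G\in\mathfrak{R}H^\infty_{m\times p}$ and $K\in\mathfrak{R}H^\infty_{m\times q}$ be given by the minimal realization \[ \begin{bmatrix} G(z) & K(z)\end{bmatrix}=\begin{bmatrix} D_1 & D_2\end{bmatrix}+zC(I_n-zA)^{-1}\begin{bmatrix} B_1 & B_2\end{bmatrix}, \] with $A$ a stable $n\times n$ matrix. Let $F\in\mathfrak{R}H^\infty_{m\times r}$ be a function of the form $F(z)=D_3+zC(I_n-zA)^{-1}B_3$ such that $T_GT_G^*-T_KT_K^*-T_FT_F^*=W_{obs}(P_3+P_2-P_1)W_{obs}^*$ and $P_3+P_2-P_1\ge 0$, where $P_3$ is the controllability Gramian of $\{A,B_3\}$. Let $Y=\sum_{\nu\ge0}(A^* )^\nu C^*CA^\nu$ (the solution of $Y=A^*YA+C^*C$), set $\Upsilon=(P_3+P_2-P_1)^{1/2}$, and let \[ U=\begin{bmatrix}\alpha&\beta_1&\beta_2\\ \gamma&\delta_1&\delta_2\end{bmatrix}:\mathbb{C}^n\oplus\mathbb{C}^q\oplus\mathbb{C}^r\to\mathbb{C}^n\oplus\mathbb{C}^p \] be defined by \[ U=\begin{bmatrix}\Upsilon Y\Upsilon & \Upsilon YB_1\\ B_1^*Y\Upsilon & D_1^*D_1+B_1^*YB_1\end{bmatrix}^{+} \begin{bmatrix}\Upsilon YA\Upsilon & \Upsilon YB_2 & \Upsilon YB_3\\ D_1^*C\Upsilon+B_1^*YA\Upsilon & D_1^*D_2+B_1^*YB_2 & D_1^*D_3+B_1^*YB_3\end{bmatrix}, \]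 where ${}^+$ denotes the Moore--Penrose generalized inverse. Then $U$ is a partial isometry and: (i) the function $X(z)=\delta_1+z\gamma(I-z\alpha)^{-1}\beta_1$ is a $p\times q$ stable rational matrix function satisfying $G(z)X(z)=K(z)$ for $z\in\mathbb{D}$ and $\sup_{z\in\mathbb{D}}\|X(z)\|\le 1$; (ii) the function $\Psi(z)=\delta_2+z\gamma(I-z\alpha)^{-1}\beta_2$ is a $p\times r$ stable rational matrix function with $\sup_{z\in\mathbb{D}}\|\Psi(z)\|\le1$ and $G(z)\Psi(z)=F(z)$.
   Context: $\mathfrak{R}H^\infty_{k\times l}$ denotes the $k\times l$ rational matrix functions with no poles in the closed unit disc; $\mathbb{D}$ is the open unit disc. A square matrix is stable if all eigenvalues lie in $\mathbb{D}$. A realization is minimal if it has the smallest possible state dimension (equivalently, it is observable and controllable). $\ell^2_+(\mathbb{C}^k)$ is the space of square summable $\mathbb{C}^k$-valued sequences indexed by $j\ge0$; for a matrix $H^\infty$ function $\Omega$ with Taylor coefficients $\Omega_j$, $T_\Omega$ is the block lower triangular Toeplitz operator with $(i,j)$ block $\Omega_{i-j}$ (zero if $i<j$). $W_{obs}=\operatorname{col}(CA^j)_{j\ge0}:\mathbb{C}^n\to\ell^2_+(\mathbb{C}^m)$. For $j=1,2,3$, $P_j=\sum_{\nu\ge0}A^\nu B_jB_j^*(A^* )^\nu$. The Moore--Penrose inverse $T^+$ of a matrix $T$ is the unique matrix with $T^+T$ and $TT^+$ the orthogonal projections onto $\operatorname{Im}T^*$ and $\operatorname{Im}T$, respectively.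 *)

From mathcomp Require Export all_boot all_algebra complex reals.
Set Implicit Arguments.
Unset Strict Implicit.
Unset Printing Implicit Defensive.
Import GRing.Theory Num.Theory.
Local Open Scope ring_scope.

Section Defs.
Variable C : numClosedFieldType.

Definition adjmx m n (M : 'M[C]_(m, n)) : 'M[C]_(n, m) := (map_mx Num.conj M)^T.

Definition psdmx n (M : 'M[C]_n) : Prop :=
  adjmx M = M /\ forall v : 'cV[C]_n, 0 <= (adjmx v *m M *m v) 0 0.

Definition stable_mx n (A : 'M[C]_n) : Prop :=
  forall l : C, eigenvalue A l -> `|l| < 1.

(* observability of {Cm, A}: ker W_obs = 0 *)
Definition observable k n (Cm : 'M[C]_(k, n)) (A : 'M[C]_n) : Prop :=
  forall x : 'cV[C]_n, (forall j, Cm *m A ^+ j *m x = 0) -> x = 0.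

(* controllability of {A, B}: the ranges of A^j B span C^n *)
Definition controllable n k (A : 'M[C]_n) (B : 'M[C]_(n, k)) : Prop :=
  forall y : 'rV[C]_n, (forall j, y *m A ^+ j *m B = 0) -> y = 0.

Definition cvg_seq (u : nat -> C) (l : C) : Prop :=
  forall e : C, 0 < e -> exists N, forall k, (N <= k)%N -> `|u k - l| < e.

Definition mx_series_sum m n (u : nat -> 'M[C]_(m, n)) (S : 'M[C]_(m, n)) :
  Prop := forall i j, cvg_seq (fun N => \sum_(k < N) u k i j) (S i j).

Definition ctrl_gramian n k (A : 'M[C]_n) (B : 'M[C]_(n, k)) (P : 'M[C]_n) :=
  mx_series_sum (fun nu => A ^+ nu *m B *m adjmx B *m (adjmx A) ^+ nu) P.

Definition obs_gramian k n (Cm : 'M[C]_(k, n)) (A : 'M[C]_n) (Y : 'M[C]_n) :=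
  mx_series_sum (fun nu => (adjmx A) ^+ nu *m adjmx Cm *m Cm *m A ^+ nu) Y.

Definition orth_proj n (P : 'M[C]_n) : Prop := P *m P = P /\ adjmx P = P.

Definition moore_penrose m n (T : 'M[C]_(m, n)) (X : 'M[C]_(n, m)) : Prop :=
  [/\ T *m X *m T = T, X *m T *m X = X,
      adjmx (T *m X) = T *m X & adjmx (X *m T) = X *m T].

Definition partial_isometry m n (U : 'M[C]_(m, n)) : Prop :=
  orth_proj (adjmx U *m U).

Definition realize p q n (D : 'M[C]_(p, q)) (Cm : 'M[C]_(p, n)) (A : 'M[C]_n)
  (B : 'M[C]_(n, q)) (z : C) : 'M[C]_(p, q) :=
  D + z *: (Cm *m invmx (1%:M - z *: A) *m B).

(* Taylor coefficients of the realization: D, Cm B, Cm A B, Cm A^2 B, ... *)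
Definition markov p q n (D : 'M[C]_(p, q)) (Cm : 'M[C]_(p, n)) (A : 'M[C]_n)
  (B : 'M[C]_(n, q)) (j : nat) : 'M[C]_(p, q) :=
  if j is k.+1 then Cm *m A ^+ k *m B else D.

(* (i,j) block of T_Omega T_Omega^H for the block lower triangular Toeplitz
   operator T_Omega with coefficient sequence Om :
   sum_{l <= min(i,j)} Om_{i-l} Om_{j-l}^*  *)
Definition toep_gram_block p q (Om : nat -> 'M[C]_(p, q)) (i j : nat)
  : 'M[C]_p := \sum_(l < (minn i j).+1) Om (i - l)%N *m adjmx (Om (j - l)%N).

Definition stable_rational p q (dom : C -> Prop) (f : C -> 'M[C]_(p, q)) :=
  exists (N : 'M[{poly C}]_(p, q)) (d : {poly C}),
    (forall z : C, `|z| <= 1 -> d.[z] != 0) /\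
    (forall z : C, dom z -> f z = map_mx (fun P => P.[z] / d.[z]) N).

Definition contraction p q (M : 'M[C]_(p, q)) : Prop :=
  forall v : 'cV[C]_q,
    (adjmx (M *m v) *m (M *m v)) 0 0 <= (adjmx v *m v) 0 0.

End Defs.

(* Observability turns the Toeplitz identity into Stein equations for
   [Q = P3 + P2 - P1], which say exactly that [M1 M1^* = M2 M2^*] for
   [M1 = [Ups B1; 0 D1]] and [M2 = [A Ups, B2 B3; Cm Ups, D2 D3]].  With the
   weight [W = diag(Y, I)], positive definite by observability, the "lurking
   isometry" [U = (M1^* W M1)^+ M1^* W M2] is a partial isometry solving
   [M1 U = M2].  The blocks of [M1 U = M2] are intertwinings that give
   [G X = K] and [G Psi = F] on the disc; contractivity of [U] passes to the
   realizations, and stability of [A] makes [1 - z alpha] invertible for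
   [|z| <= 1], which yields stable rational functions via Cramer's rule. *)

From mathcomp Require Import all_boot all_order all_algebra complex reals.
Set Implicit Arguments.
Unset Strict Implicit.
Unset Printing Implicit Defensive.
Import Order.TTheory GRing.Theory Num.Theory.
Local Open Scope ring_scope.

Section Adjoint.
Variable C : numClosedFieldType.

Lemma adjmxE m n (M : 'M[C]_(m, n)) i j : adjmx M i j = (M j i)^*.
Proof. by rewrite !mxE. Qed.

Lemma adjmxK m n (M : 'M[C]_(m, n)) : adjmx (adjmx M) = M.
Proof. by apply/matrixP=> i j; rewrite !adjmxE conjCK. Qed.

Lemma adjmxM m n k (M : 'M[C]_(m, n)) (N : 'M[C]_(n, k)) :
  adjmx (M *m N) = adjmx N *m adjmx M.
Proof. by rewrite /adjmx map_mxM trmx_mul. Qed.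

Lemma adjmxD m n (M N : 'M[C]_(m, n)) : adjmx (M + N) = adjmx M + adjmx N.
Proof. by rewrite /adjmx map_mxD linearD. Qed.

Lemma adjmxB m n (M N : 'M[C]_(m, n)) : adjmx (M - N) = adjmx M - adjmx N.
Proof. by rewrite /adjmx map_mxB linearB. Qed.

Lemma adjmxZ m n (z : C) (M : 'M[C]_(m, n)) : adjmx (z *: M) = z^* *: adjmx M.
Proof. by rewrite /adjmx map_mxZ linearZ. Qed.

Lemma adjmx0 m n : adjmx (0 : 'M[C]_(m, n)) = 0.
Proof. by rewrite /adjmx map_mx0 trmx0. Qed.

Lemma adjmx1 n : adjmx (1%:M : 'M[C]_n) = 1%:M.
Proof. by rewrite /adjmx map_mx1 trmx1. Qed.

Lemma adjmxX n (M : 'M[C]_n) k : adjmx (M ^+ k) = adjmx M ^+ k.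
Proof.
elim: k => [|k IHk]; first by rewrite !expr0 adjmx1.
by rewrite exprS -mulmxE adjmxM IHk mulmxE -exprSr.
Qed.

Lemma adjmx_block m1 m2 n1 n2 (a : 'M[C]_(m1, n1)) (b : 'M[C]_(m1, n2))
  (c : 'M[C]_(m2, n1)) (d : 'M[C]_(m2, n2)) :
  adjmx (block_mx a b c d) = block_mx (adjmx a) (adjmx c) (adjmx b) (adjmx d).
Proof. by rewrite /adjmx map_block_mx tr_block_mx. Qed.

Lemma adjmx_row m n1 n2 (a : 'M[C]_(m, n1)) (b : 'M[C]_(m, n2)) :
  adjmx (row_mx a b) = col_mx (adjmx a) (adjmx b).
Proof. by rewrite /adjmx map_row_mx tr_row_mx. Qed.

Lemma adjmx_col m1 m2 n (a : 'M[C]_(m1, n)) (b : 'M[C]_(m2, n)) :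
  adjmx (col_mx a b) = row_mx (adjmx a) (adjmx b).
Proof. by rewrite /adjmx map_col_mx tr_col_mx. Qed.

End Adjoint.

Section SquaredNorm.
Variable C : numClosedFieldType.

Definition sqnorm n (v : 'cV[C]_n) : C := (adjmx v *m v) 0 0.

Lemma sqnormE n (v : 'cV[C]_n) : sqnorm v = \sum_i v i 0 * (v i 0)^*.
Proof. by rewrite /sqnorm mxE; apply: eq_bigr => i _; rewrite adjmxE mulrC. Qed.

Lemma sqnorm_ge0 n (v : 'cV[C]_n) : 0 <= sqnorm v.
Proof. by rewrite sqnormE sumr_ge0 // => i _; rewrite mul_conjC_ge0. Qed.

Lemma sqnorm_eq0 n (v : 'cV[C]_n) : sqnorm v = 0 -> v = 0.
Proof.
rewrite sqnormE => /psumr_eq0P v0; apply/matrixP => i j; rewrite (ord1 j) mxE.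
apply/eqP; rewrite -mul_conjC_eq0; apply/eqP/v0 => // k _.
by rewrite mul_conjC_ge0.
Qed.

Lemma sqnorm0 n : sqnorm (0 : 'cV[C]_n) = 0.
Proof. by rewrite /sqnorm mulmx0 mxE. Qed.

Lemma sqnorm_col n1 n2 (a : 'cV[C]_n1) (b : 'cV[C]_n2) :
  sqnorm (col_mx a b) = sqnorm a + sqnorm b.
Proof. by rewrite /sqnorm adjmx_col mul_row_col mxE. Qed.

Lemma sqnormZ n (z : C) (v : 'cV[C]_n) : sqnorm (z *: v) = z^* * z * sqnorm v.
Proof. by rewrite /sqnorm adjmxZ -scalemxAl -scalemxAr !mxE mulrA. Qed.

Lemma mulmx_adj_eq0 m n (X : 'M[C]_(m, n)) : X *m adjmx X = 0 -> X = 0.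
Proof.
move=> XX0; apply/matrixP => i j; rewrite mxE.
have : (X *m adjmx X) i i = 0 by rewrite XX0 mxE.
rewrite mxE => /psumr_eq0P Xi0; apply/eqP; rewrite -mul_conjC_eq0; apply/eqP.
by rewrite -adjmxE; apply: Xi0 => // k _; rewrite adjmxE mul_conjC_ge0.
Qed.

Lemma contraction_partial_isometry m n (U : 'M[C]_(m, n)) :
  partial_isometry U -> contraction U.
Proof.
move=> [PP PA] v; set P := adjmx U *m U in PP PA.
have IP : adjmx (1%:M - P) *m (1%:M - P) = 1%:M - P.
  by rewrite adjmxB adjmx1 PA mulmxBl mul1mx mulmxBr mulmx1 PP subrr subr0.
rewrite -subr_ge0 -/(sqnorm v).
have -> : sqnorm v - (adjmx (U *m v) *m (U *m v)) 0 0 = sqnorm ((1%:M - P) *m v).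
  rewrite /sqnorm [in RHS]adjmxM [in RHS]mulmxA -(mulmxA (adjmx v) (adjmx _)) IP.
  rewrite mulmxBr mulmx1 mulmxBl /P adjmxM !mulmxA.
  by set a := _ *m v; set b := _ *m v; rewrite !mxE.
exact: (sqnorm_ge0 ((1%:M - P) *m v)).
Qed.

Lemma contraction_block_rowl m n p q1 q2 (a : 'M[C]_(m, n))
  (b1 : 'M[C]_(m, q1)) (b2 : 'M[C]_(m, q2)) (c : 'M[C]_(p, n))
  (d1 : 'M[C]_(p, q1)) (d2 : 'M[C]_(p, q2)) :
  contraction (block_mx a (row_mx b1 b2) c (row_mx d1 d2)) ->
  contraction (block_mx a b1 c d1).
Proof.
move=> cU v; have := cU (col_mx (usubmx v) (col_mx (dsubmx v) 0)).
rewrite -!/(sqnorm _) -[v]vsubmxK !mul_block_col !mul_row_col !mulmx0 !addr0.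
by rewrite !sqnorm_col sqnorm0 addr0 !col_mxKu !col_mxKd.
Qed.

Lemma contraction_block_rowr m n p q1 q2 (a : 'M[C]_(m, n))
  (b1 : 'M[C]_(m, q1)) (b2 : 'M[C]_(m, q2)) (c : 'M[C]_(p, n))
  (d1 : 'M[C]_(p, q1)) (d2 : 'M[C]_(p, q2)) :
  contraction (block_mx a (row_mx b1 b2) c (row_mx d1 d2)) ->
  contraction (block_mx a b2 c d2).
Proof.
move=> cU v; have := cU (col_mx (usubmx v) (col_mx 0 (dsubmx v))).
rewrite -!/(sqnorm _) -[v]vsubmxK !mul_block_col !mul_row_col !mulmx0 !add0r.
by rewrite !sqnorm_col sqnorm0 add0r !col_mxKu !col_mxKd.
Qed.

End SquaredNorm.

Section Convergence.
Variable C : numClosedFieldType.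
Implicit Types (u v : nat -> C) (a b : C).

Lemma cvg_seq_cst a : cvg_seq (fun _ => a) a.
Proof. by move=> e e0; exists 0%N => k _; rewrite subrr normr0. Qed.

Lemma cvg_seqD u v a b :
  cvg_seq u a -> cvg_seq v b -> cvg_seq (fun N => u N + v N) (a + b).
Proof.
move=> ua vb e e0; have e20 : 0 < e / 2 by rewrite divr_gt0.
have [N1 uN1] := ua _ e20; have [N2 vN2] := vb _ e20.
exists (maxn N1 N2) => k; rewrite geq_max => /andP[kN1 kN2].
rewrite opprD addrACA (le_lt_trans (ler_normD _ _)) // (splitr e).
by rewrite ltrD ?uN1 ?vN2.
Qed.

Lemma cvg_seqMl u a b : cvg_seq u a -> cvg_seq (fun N => b * u N) (b * a).
Proof.
move=> ua e e0; have b0 : 0 < `|b| + 1 by rewrite ltr_wpDl.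
have [N uN] := ua (e / (`|b| + 1)) (divr_gt0 e0 b0).
exists N => k kN; rewrite -mulrBr normrM.
apply: (@le_lt_trans _ _ (`|b| * (e / (`|b| + 1)))).
  by rewrite ler_wpM2l // ltW // uN.
by rewrite mulrA ltr_pdivrMr // mulrC ltr_pM2l // ltrDl ltr01.
Qed.

Lemma eq_cvg_seq u v a : u =1 v -> cvg_seq u a -> cvg_seq v a.
Proof.
move=> uv ua e e0; have [N uN] := ua e e0.
by exists N => k; rewrite -uv; apply: uN.
Qed.

Lemma cvg_seq_sum (I : Type) (s : seq I) (u : I -> nat -> C) (l : I -> C) :
  (forall i, cvg_seq (u i) (l i)) ->
  cvg_seq (fun N => \sum_(i <- s) u i N) (\sum_(i <- s) l i).
Proof.
move=> ul; elim: s => [|i s IHs].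
  by rewrite big_nil; apply: eq_cvg_seq (cvg_seq_cst 0) => N; rewrite big_nil.
rewrite big_cons; apply: eq_cvg_seq (cvg_seqD (ul i) IHs) => N.
by rewrite big_cons.
Qed.

Lemma cvg_seq_nondecreasing_nonpos u a :
  (forall N, 0 <= u N) -> {homo u : i j / (i <= j)%N >-> i <= j} ->
  cvg_seq u a -> a <= 0 -> forall N, u N = 0.
Proof.
move=> u_ge0 u_mono ua a_le0 N; apply/eqP; rewrite eq_le u_ge0 andbT.
apply/negP => /negP; rewrite -real_ltNge ?real0 ?ger0_real // => uN_gt0.
have [K uK] := ua _ uN_gt0; set k := maxn K N.
have uNk : u N <= u k - a.
  by rewrite (le_trans (u_mono _ _ (leq_maxr K N))) // lerDl oppr_ge0.
have := uK k (leq_maxl K N).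
rewrite ger0_norm ?(le_trans (u_ge0 N)) // => /(le_lt_trans uNk).
by rewrite ltxx.
Qed.

End Convergence.

Section Observability.
Variables (C : numClosedFieldType) (k n : nat) (Cm : 'M[C]_(k, n)) (A : 'M[C]_n).
Hypothesis obsCA : observable Cm A.

Lemma observable_mx q (X : 'M[C]_(n, q)) :
  (forall j, Cm *m A ^+ j *m X = 0) -> X = 0.
Proof.
move=> CAX0; apply/matrixP => i j.
have -> : X i j = (X *m (delta_mx j 0 : 'cV[C]_q)) i 0 by rewrite -colE mxE.
have -> : X *m (delta_mx j 0 : 'cV[C]_q) = 0.
  by apply: obsCA => l; rewrite mulmxA CAX0 mul0mx.
by rewrite !mxE.
Qed.

Lemma observable_mx2 (Z : 'M[C]_n) :
  (forall i j, Cm *m A ^+ i *m Z *m adjmx A ^+ j *m adjmx Cm = 0) -> Z = 0.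
Proof.
move=> CAZAC0; have ZAC0 j : Z *m (adjmx A ^+ j *m adjmx Cm) = 0.
  by apply: observable_mx => i; rewrite !mulmxA CAZAC0.
rewrite -[Z]adjmxK (_ : adjmx Z = 0) ?adjmx0 //; apply: observable_mx => j.
rewrite -(adjmxK Cm) -(adjmxK (A ^+ j)) -!adjmxM [adjmx (Cm *m _)]adjmxM.
by rewrite adjmxX ZAC0 adjmx0.
Qed.

Lemma obs_gramian_form_cvg (Y : 'M[C]_n) (w : 'cV[C]_n) : obs_gramian Cm A Y ->
  cvg_seq (fun N => \sum_(j < N) sqnorm (Cm *m A ^+ j *m w))
          ((adjmx w *m Y *m w) 0 0).
Proof.
pose term j := adjmx A ^+ j *m adjmx Cm *m Cm *m A ^+ j.
have formE (M : 'M[C]_n) :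
    (adjmx w *m M *m w) 0 0 = \sum_j \sum_i (w i 0)^* * w j 0 * M i j.
  rewrite mxE; apply: eq_bigr => j _; rewrite mxE big_distrl /=.
  by apply: eq_bigr => i _; rewrite adjmxE mulrAC mulrC mulrA.
move=> gramY; rewrite formE; apply: (@eq_cvg_seq _
  (fun N => \sum_j \sum_i (w i 0)^* * w j 0 * (\sum_(l < N) term l) i j)).
  move=> N; rewrite -formE mulmx_sumr mulmx_suml summxE.
  by apply: eq_bigr => j _; rewrite /sqnorm /term !adjmxM adjmxX !mulmxA.
apply: cvg_seq_sum => j; apply: cvg_seq_sum => i.
apply: cvg_seqMl; apply: eq_cvg_seq (gramY i j) => N.
by rewrite summxE.
Qed.

Lemma obs_gramian_definite (Y : 'M[C]_n) (w : 'cV[C]_n) :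
  obs_gramian Cm A Y -> (adjmx w *m Y *m w) 0 0 <= 0 -> w = 0.
Proof.
move=> gramY form_le0; apply: obsCA => j; apply: sqnorm_eq0.
pose s N := \sum_(i < N) sqnorm (Cm *m A ^+ i *m w).
have s_ge0 N : 0 <= s N by apply: sumr_ge0 => i _; apply: sqnorm_ge0.
have s_mono : {homo s : i j / (i <= j)%N >-> i <= j}.
  move=> i i' ii'; rewrite /s.
  rewrite -!(big_mkord xpredT (fun l => sqnorm (Cm *m A ^+ l *m w))).
  rewrite (big_cat_nat (leq0n i) ii') /= lerDl.
  by apply: sumr_ge0 => l _; apply: sqnorm_ge0.
have s0 := cvg_seq_nondecreasing_nonpos s_ge0 s_mono
  (obs_gramian_form_cvg w gramY) form_le0 j.+1.
rewrite /s in s0.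
by have /(_ ord_max isT) := psumr_eq0P (fun i _ => sqnorm_ge0 _) s0.
Qed.

Lemma obs_gramian_block_definite m (Y : 'M[C]_n) : obs_gramian Cm A Y ->
  forall w : 'cV[C]_(n + m),
    (adjmx w *m block_mx Y 0 0 1%:M *m w) 0 0 = 0 -> w = 0.
Proof.
move=> gramY w; rewrite -[w]vsubmxK adjmx_col mul_row_block mul_row_col.
rewrite !mulmx0 !addr0 add0r mulmx1 mxE -/(sqnorm _) => /eqP.
rewrite addr_eq0 => /eqP formY.
have w1 : usubmx w = 0.
  by apply: obs_gramian_definite gramY _; rewrite formY oppr_le0 sqnorm_ge0.
move: formY; rewrite w1 mulmx0 mxE => /esym/eqP; rewrite oppr_eq0.
move=> /eqP/sqnorm_eq0 ->.
by rewrite col_mx0.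
Qed.

End Observability.

Section LurkingIsometry.
Variables (C : numClosedFieldType) (a b c : nat).
Variables (M1 : 'M[C]_(a, b)) (M2 : 'M[C]_(a, c)) (W : 'M[C]_a) (Mp : 'M[C]_b).
Hypothesis gram_eq : M1 *m adjmx M1 = M2 *m adjmx M2.
Hypothesis W_definite :
  forall w : 'cV[C]_a, (adjmx w *m W *m w) 0 0 = 0 -> w = 0.
Hypothesis Mp_pinv : moore_penrose (adjmx M1 *m W *m M1) Mp.

Definition lurking_isometry : 'M[C]_(b, c) := Mp *m (adjmx M1 *m W *m M2).

Let Pi := Mp *m (adjmx M1 *m W *m M1).
Let Gm := Mp *m adjmx M1 *m W.

Lemma Pi_factor : Pi = Gm *m M1.
Proof. by rewrite /Pi /Gm !mulmxA. Qed.

Lemma adjmx_Pi : adjmx Pi = Pi.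
Proof. by case: Mp_pinv. Qed.

Lemma Pi_idem : Pi *m Pi = Pi.
Proof. by case: Mp_pinv => _ MpSMp _ _; rewrite /Pi mulmxA MpSMp. Qed.

Lemma Pi_lurking : Pi *m lurking_isometry = lurking_isometry.
Proof.
by case: Mp_pinv => _ MpSMp _ _; rewrite /Pi /lurking_isometry mulmxA MpSMp.
Qed.

(* Each column u of [1 - Pi] satisfies [u^* S u = 0] for [S = M1^* W M1],
   hence [M1 u = 0] by definiteness of [W]. *)
Lemma M1_Pi : M1 *m Pi = M1.
Proof.
case: Mp_pinv => SMpS _ _ _; set S := adjmx M1 *m W *m M1 in SMpS.
have S_Pi : S *m (1%:M - Pi) = 0.
  by rewrite mulmxBr mulmx1 /Pi -/S mulmxA SMpS subrr.
apply/eqP; rewrite eq_sym -subr_eq0 -{1}[M1]mulmx1 -mulmxBr; apply/eqP.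
apply/matrixP => i j; rewrite [RHS]mxE.
set u := (1%:M - Pi) *m (delta_mx j 0 : 'cV[C]_b).
have -> : (M1 *m (1%:M - Pi)) i j = (M1 *m u) i 0.
  by rewrite /u mulmxA -colE [in RHS]mxE.
have /W_definite -> : (adjmx (M1 *m u) *m W *m (M1 *m u)) 0 0 = 0.
  have -> : adjmx (M1 *m u) *m W *m (M1 *m u) = adjmx u *m (S *m u).
    by rewrite adjmxM /S !mulmxA.
  by rewrite /u (mulmxA S) S_Pi mul0mx mulmx0 mxE.
by rewrite mxE.
Qed.

Lemma lurking_isometry_solution : M1 *m lurking_isometry = M2.
Proof.
set E := M1 *m Gm.
have EM1 : (1%:M - E) *m M1 = 0.
  by rewrite mulmxBl mul1mx /E -mulmxA -Pi_factor M1_Pi subrr.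
have : (1%:M - E) *m M2 = 0.
  apply: mulmx_adj_eq0; rewrite adjmxM mulmxA -(mulmxA _ M2) -gram_eq.
  by rewrite mulmxA EM1 !mul0mx.
move/eqP; rewrite mulmxBl mul1mx subr_eq0 => /eqP {1}->.
by rewrite /E /Gm /lurking_isometry !mulmxA.
Qed.

Lemma lurking_isometry_partial : partial_isometry lurking_isometry.
Proof.
have PiU : Pi *m lurking_isometry = lurking_isometry := Pi_lurking.
have M1U : M1 *m lurking_isometry = M2 := lurking_isometry_solution.
set U := lurking_isometry in PiU M1U *.
have UPi : adjmx U *m Pi = adjmx U by rewrite -{2}PiU adjmxM adjmx_Pi.
have PiUUPi : Pi *m U *m adjmx U *m Pi = Pi.
  have PiGM2 : Pi *m U = Gm *m M2 by rewrite Pi_factor -mulmxA M1U.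
  rewrite -mulmxA UPi -{2}PiU PiGM2 adjmxM mulmxA -(mulmxA Gm M2) -gram_eq.
  rewrite mulmxA -mulmxA -adjmxM -Pi_factor adjmx_Pi.
  exact: Pi_idem.
have UUU : U *m adjmx U *m U = U.
  have -> : U *m adjmx U *m U = Pi *m U *m (adjmx U *m Pi) *m U.
    by rewrite UPi PiU.
  by rewrite mulmxA PiUUPi PiU.
split; last by rewrite adjmxM adjmxK.
by rewrite -mulmxA (mulmxA U) UUU.
Qed.

Lemma lurking_isometry_kernel (v : 'cV[C]_c) :
  M1 *m (lurking_isometry *m v) = 0 -> lurking_isometry *m v = 0.
Proof.
move=> M1Uv0; rewrite -Pi_lurking Pi_factor -(mulmxA _ lurking_isometry).
by rewrite -(mulmxA Gm) M1Uv0 mulmx0.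
Qed.

End LurkingIsometry.

Section Realization.
Variable C : numClosedFieldType.
Implicit Types z : C.

Lemma eigenvalue_col n (A : 'M[C]_n) (y : 'cV[C]_n) l :
  y != 0 -> A *m y = l *: y -> eigenvalue A l.
Proof.
move=> y0 Ay; apply/eigenvalueP.
have /det0P [v v0 vAl] : \det (A - l%:M) == 0.
  rewrite -det_tr; apply/det0P; exists y^T.
    by apply: contra y0 => /eqP yT0; rewrite -[y]trmxK yT0 trmx0.
  by rewrite -trmx_mul mulmxBl Ay mul_scalar_mx subrr trmx0.
by exists v => //; apply/eqP; rewrite -subr_eq0 -mul_mx_scalar -mulmxBr vAl.
Qed.

Lemma nonunitmx_col n (M : 'M[C]_n) : M \notin unitmx ->
  exists2 x : 'cV[C]_n, x != 0 & M *m x = 0.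
Proof.
rewrite unitmxE unitfE negbK -det_tr => /det0P [v v0 vM0].
exists v^T; first by apply: contra v0 => /eqP vT0; rewrite -[v]trmxK vT0 trmx0.
by apply: trmx_inj; rewrite trmx_mul trmxK trmx0.
Qed.

Lemma stable_mx_unitmx n (A : 'M[C]_n) z : stable_mx A -> `|z| < 1 ->
  (1%:M - z *: A) \in unitmx.
Proof.
move=> stA z1; apply/negPn/negP; rewrite unitmxE unitfE negbK => /det0P [v v0].
rewrite mulmxBr mulmx1 => /eqP; rewrite subr_eq0 -scalemxAr => /eqP v_zvA.
have z0 : z != 0 by apply: contra v0 => /eqP z0; rewrite v_zvA z0 scale0r.
have /stA : eigenvalue A z^-1.
  by apply/eigenvalueP; exists v; rewrite // {2}v_zvA scalerA mulVf ?scale1r.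
by rewrite normfV invf_lt1 ?normr_gt0 // => /(lt_trans z1); rewrite ltxx.
Qed.

(* If [(1 - z alpha) x = 0] with [|z| <= 1], contractivity forces
   [gamma x = 0], so [Ups x] is an eigenvector of [A] for [1/z] unless
   [Ups x = 0]; stability leaves [Ups x = 0], and then [U (x, 0) = 0] gives
   [x = z alpha x = 0]. *)
Lemma unitmx_ulsubmx n p s (A Ups : 'M[C]_n) (B : 'M[C]_(n, p))
  (U : 'M[C]_(n + p, n + s)) z :
  stable_mx A -> contraction U ->
  Ups *m ulsubmx U + B *m dlsubmx U = A *m Ups ->
  (forall x : 'cV[C]_n, Ups *m x = 0 -> U *m col_mx x 0 = 0) ->
  `|z| <= 1 -> (1%:M - z *: ulsubmx U) \in unitmx.
Proof.
move=> stA cU intertw Uker z1.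
apply/negPn/negP => /nonunitmx_col [x x0].
rewrite mulmxBl mul1mx -scalemxAl => /eqP; rewrite subr_eq0 => /eqP x_zax.
have z0 : z != 0 by apply: contra x0 => /eqP z0; rewrite x_zax z0 scale0r.
have ax : ulsubmx U *m x = z^-1 *: x by rewrite {2}x_zax scalerA mulVf ?scale1r.
have Ux : U *m col_mx x 0 = col_mx (ulsubmx U *m x) (dlsubmx U *m x).
  by rewrite -{1}[U]submxK mul_block_col !mulmx0 !addr0.
have x_le_ax : sqnorm x <= sqnorm (ulsubmx U *m x).
  rewrite ax sqnormZ ler_peMl ?sqnorm_ge0 // mulrC -normCK normfV.
  by rewrite exprn_ege1 // invf_ge1 ?normr_gt0.
have gx : dlsubmx U *m x = 0.
  apply: sqnorm_eq0; apply/eqP; rewrite eq_le sqnorm_ge0 andbT.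
  have := cU (col_mx x 0); rewrite -!/(sqnorm _) Ux !sqnorm_col sqnorm0 addr0.
  by move/le_trans/(_ x_le_ax); rewrite -lerBrDl subrr.
have Upsx : Ups *m x = 0.
  have AUx : A *m (Ups *m x) = z^-1 *: (Ups *m x).
    by rewrite mulmxA -intertw mulmxDl -!mulmxA gx mulmx0 addr0 ax scalemxAr.
  have [//|Ux0] := eqVneq (Ups *m x) 0.
  have := stA _ (eigenvalue_col Ux0 AUx).
  by rewrite normfV invf_lt1 ?normr_gt0 // => /(le_lt_trans z1); rewrite ltxx.
move: (Uker x Upsx); rewrite Ux => /eqP; rewrite col_mx_eq0.
case/andP => /eqP ax0 _.
by move: x0; rewrite x_zax ax0 scaler0 eqxx.
Qed.

Lemma contraction_realize n p q (alpha : 'M[C]_n) (beta : 'M[C]_(n, q))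
  (gamma : 'M[C]_(p, n)) (delta : 'M[C]_(p, q)) z :
  contraction (block_mx alpha beta gamma delta) -> `|z| <= 1 ->
  (1%:M - z *: alpha) \in unitmx ->
  contraction (realize delta gamma alpha beta z).
Proof.
move=> cU z1 unit_a v; rewrite -!/(sqnorm _).
set x := invmx (1%:M - z *: alpha) *m beta *m v.
have state : alpha *m (z *: x) + beta *m v = x.
  have : (1%:M - z *: alpha) *m x = beta *m v by rewrite /x -!mulmxA mulKVmx.
  by rewrite mulmxBl mul1mx -scalemxAl scalemxAr => <-; rewrite addrC subrK.
have output :
    gamma *m (z *: x) + delta *m v = realize delta gamma alpha beta z *m v.
  by rewrite /realize mulmxDl addrC -scalemxAl -scalemxAr /x !mulmxA.
have := cU (col_mx (z *: x) v).
rewrite -!/(sqnorm _) mul_block_col state output.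
rewrite !sqnorm_col sqnormZ => le_sum.
have zx_le : z^* * z * sqnorm x <= sqnorm x.
  by rewrite ler_piMl ?sqnorm_ge0 // mulrC -normCK expr_le1.
by move: (le_trans le_sum (lerD zx_le (lexx (sqnorm v)))); rewrite lerD2l.
Qed.

Lemma realize_mul n k m p q (A : 'M[C]_n) (Cm : 'M[C]_(m, n))
  (B1 : 'M[C]_(n, p)) (D1 : 'M[C]_(m, p)) (B2 : 'M[C]_(n, q)) (D2 : 'M[C]_(m, q))
  (alpha : 'M[C]_k) (beta : 'M[C]_(k, q)) (gamma : 'M[C]_(p, k))
  (delta : 'M[C]_(p, q)) (Ups : 'M[C]_(n, k)) z :
  (1%:M - z *: A) \in unitmx -> (1%:M - z *: alpha) \in unitmx ->
  Ups *m alpha + B1 *m gamma = A *m Ups -> Ups *m beta + B1 *m delta = B2 ->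
  D1 *m gamma = Cm *m Ups -> D1 *m delta = D2 ->
  realize D1 Cm A B1 z *m realize delta gamma alpha beta z = realize D2 Cm A B2 z.
Proof.
move=> unitA unit_a eqA eqB eqC eqD.
set RA := invmx (1%:M - z *: A); set Ra := invmx (1%:M - z *: alpha).
have resolvent : z *: (RA *m B1 *m gamma *m Ra) = RA *m Ups - Ups *m Ra.
  have zBg :
      z *: (B1 *m gamma) = Ups *m (1%:M - z *: alpha) - (1%:M - z *: A) *m Ups.
    rewrite mulmxBr mulmxBl mulmx1 mul1mx opprB addrC addrA subrK.
    rewrite -scalemxAl -scalemxAr -scalerBr -eqA.
    by rewrite (addrC (Ups *m alpha)) addrK.
  rewrite -(mulmxA RA) scalemxAl scalemxAr zBg mulmxBr mulmxBl.
  by rewrite !mulmxA mulmxK // mulVmx // mul1mx.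
rewrite /realize -/RA -/Ra mulmxDl !mulmxDr eqD -!scalemxAl -!scalemxAr.
have zz : z *: (Cm *m RA *m B1 *m (gamma *m Ra *m beta)) =
    Cm *m (RA *m Ups - Ups *m Ra) *m beta.
  by rewrite -resolvent -scalemxAr -scalemxAl !mulmxA.
rewrite zz !mulmxA eqC -eqB -addrA -!scalerDr; congr (_ + z *: _).
rewrite mulmxBr mulmxBl mulmxDr !mulmxA.
set a := Cm *m Ups *m Ra *m beta; set b := Cm *m RA *m B1 *m delta.
by rewrite addrCA (addrC a) subrK addrC.
Qed.

(* Cramer's rule: the realization is [N / d] with [M = 1 - 'X alpha],
   [d = det M] and [N = d delta + 'X gamma (adj M) beta] over [{poly C}]. *)
Lemma stable_rational_realize p q n (delta : 'M[C]_(p, q))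
  (gamma : 'M[C]_(p, n)) (alpha : 'M[C]_n) (beta : 'M[C]_(n, q)) :
  (forall z, `|z| <= 1 -> (1%:M - z *: alpha) \in unitmx) ->
  stable_rational (fun z => (1%:M - z *: alpha) \in unitmx)
    (realize delta gamma alpha beta).
Proof.
move=> unit_a.
have evalC z m' n' (M : 'M[C]_(m', n')) :
    map_mx (horner_eval z) (map_mx polyC M) = M.
  by apply/matrixP => i j; rewrite !mxE /= horner_evalE hornerC.
pose Mx : 'M[{poly C}]_n := 1%:M - 'X *: map_mx polyC alpha.
pose d := \det Mx.
pose N := d *: map_mx polyC delta +
          'X *: (map_mx polyC gamma *m \adj Mx *m map_mx polyC beta).
have evalMx z : map_mx (horner_eval z) Mx = 1%:M - z *: alpha.
  by rewrite map_mxB map_mx1 map_mxZ evalC /= horner_evalE hornerX.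
have evald z : d.[z] = \det (1%:M - z *: alpha).
  by rewrite -evalMx det_map_mx /= horner_evalE.
exists N, d; split => [z z1|z unit_z].
  by rewrite evald -unitfE -unitmxE unit_a.
have d0 : d.[z] != 0 by rewrite evald -unitfE -unitmxE.
have -> : map_mx (fun P => P.[z] / d.[z]) N =
          d.[z]^-1 *: map_mx (horner_eval z) N.
  by apply/matrixP => i j; rewrite !mxE horner_evalE mulrC.
rewrite map_mxD !map_mxZ !map_mxM map_mx_adj evalMx !evalC /= !horner_evalE.
rewrite hornerX scalerDr scalerA mulVf // scale1r /realize; congr (_ + _).
by rewrite /invmx unit_z -scalemxAr -scalemxAl !scalerA evald mulrC.
Qed.

Lemma realize_solution n k m p q (A : 'M[C]_n) (Cm : 'M[C]_(m, n))
  (B1 : 'M[C]_(n, p)) (D1 : 'M[C]_(m, p)) (B2 : 'M[C]_(n, q)) (D2 : 'M[C]_(m, q))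
  (alpha : 'M[C]_k) (beta : 'M[C]_(k, q)) (gamma : 'M[C]_(p, k))
  (delta : 'M[C]_(p, q)) (Ups : 'M[C]_(n, k)) :
  stable_mx A -> contraction (block_mx alpha beta gamma delta) ->
  (forall z, `|z| <= 1 -> (1%:M - z *: alpha) \in unitmx) ->
  Ups *m alpha + B1 *m gamma = A *m Ups -> Ups *m beta + B1 *m delta = B2 ->
  D1 *m gamma = Cm *m Ups -> D1 *m delta = D2 ->
  let X := realize delta gamma alpha beta in
  [/\ stable_rational (fun z => (1%:M - z *: alpha) \in unitmx) X,
      forall z, `|z| < 1 -> realize D1 Cm A B1 z *m X z = realize D2 Cm A B2 z
    & forall z, `|z| < 1 -> contraction (X z)].
Proof.
move=> stA cU unit_a eqA eqB eqC eqD X; split.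
- exact: stable_rational_realize.
- move=> z z1; apply: realize_mul eqA eqB eqC eqD.
    exact: stable_mx_unitmx.
  exact/unit_a/ltW.
by move=> z /ltW z1; apply: contraction_realize => //; apply: unit_a.
Qed.

End Realization.

Section ToeplitzGram.
Variables (C : numClosedFieldType) (p q : nat) (Om : nat -> 'M[C]_(p, q)).

Lemma toep_gram_block00 : toep_gram_block Om 0 0 = Om 0%N *m adjmx (Om 0%N).
Proof. by rewrite /toep_gram_block big_ord1. Qed.

Lemma toep_gram_blockS0 i :
  toep_gram_block Om i.+1 0 = Om i.+1 *m adjmx (Om 0%N).
Proof. by rewrite /toep_gram_block minn0 big_ord1 !subn0. Qed.

Lemma toep_gram_blockSS i j :
  toep_gram_block Om i.+1 j.+1 =
  Om i.+1 *m adjmx (Om j.+1) + toep_gram_block Om i j.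
Proof. by rewrite /toep_gram_block minnSS big_ord_recl /= !subn0. Qed.

End ToeplitzGram.

Lemma subr2_eq_addr (V : zmodType) (a b c x : V) :
  a - b - c = x -> a = x + (b + c).
Proof. by move=> <-; rewrite -(addrA a) -opprD subrK. Qed.

Lemma sub2_addrACA (V : zmodType) (a b c x y w : V) :
  a + x - (b + y) - (c + w) = a - b - c + (x - y - w).
Proof. by rewrite !opprD [a + x + _]addrACA (addrACA (a - b)). Qed.

Section Coupling.
Variables (C : numClosedFieldType) (m p q r n : nat).
Variables (A : 'M[C]_n) (Cm : 'M[C]_(m, n)).
Variables (B1 : 'M[C]_(n, p)) (B2 : 'M[C]_(n, q)) (B3 : 'M[C]_(n, r)).
Variables (D1 : 'M[C]_(m, p)) (D2 : 'M[C]_(m, q)) (D3 : 'M[C]_(m, r)).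
Variables (Q Y Ups : 'M[C]_n) (Mp : 'M[C]_(n + p)).
Hypothesis obsCA : observable Cm A.
Definition toep_gram_defect i j := toep_gram_block (markov D1 Cm A B1) i j
  - toep_gram_block (markov D2 Cm A B2) i j
  - toep_gram_block (markov D3 Cm A B3) i j.
Hypothesis toeplitz_gram : forall i j,
  toep_gram_defect i j = Cm *m A ^+ i *m Q *m adjmx A ^+ j *m adjmx Cm.

Lemma toep_gram_defectSS i j : toep_gram_defect i.+1 j.+1 =
  Cm *m A ^+ i *m (B1 *m adjmx B1 - B2 *m adjmx B2 - B3 *m adjmx B3)
     *m adjmx A ^+ j *m adjmx Cm + toep_gram_defect i j.
Proof.
rewrite /toep_gram_defect !toep_gram_blockSS /= sub2_addrACA; congr (_ + _).
by rewrite !adjmxM adjmxX !mulmxBr !mulmxBl !mulmxA.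
Qed.

Lemma stein_DD : D1 *m adjmx D1 - D2 *m adjmx D2 - D3 *m adjmx D3 =
  Cm *m Q *m adjmx Cm.
Proof.
have := toeplitz_gram 0 0.
by rewrite /toep_gram_defect !toep_gram_block00 !expr0 !mulmx1.
Qed.

Lemma stein_BD : B1 *m adjmx D1 - B2 *m adjmx D2 - B3 *m adjmx D3 =
  A *m Q *m adjmx Cm.
Proof.
apply/eqP; rewrite -subr_eq0; apply/eqP; apply: (observable_mx obsCA) => j.
have := toeplitz_gram j.+1 0.
rewrite /toep_gram_defect !toep_gram_blockS0 /= expr0 mulmx1 exprSr -mulmxE.
by move=> tg; rewrite !mulmxBr !mulmxA tg !mulmxA subrr.
Qed.

Lemma stein_BB : B1 *m adjmx B1 - B2 *m adjmx B2 - B3 *m adjmx B3 =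
  A *m Q *m adjmx A - Q.
Proof.
apply/eqP; rewrite -subr_eq0; apply/eqP; apply: (observable_mx2 obsCA) => i j.
have := toeplitz_gram i.+1 j.+1; rewrite toep_gram_defectSS toeplitz_gram.
move=> /(canRL (addrK _)) diffBB; rewrite mulmxBr !mulmxBl diffBB.
rewrite exprSr exprS -!mulmxE !mulmxBr !mulmxBl !mulmxA.
by rewrite opprB addrA subrK subrr.
Qed.

Hypothesis Ups_herm : adjmx Ups = Ups.
Hypothesis Ups_sqrt : Ups *m Ups = Q.

Let M1 := block_mx Ups B1 (0 : 'M_(m, n)) D1.
Let M2 := block_mx (A *m Ups) (row_mx B2 B3) (Cm *m Ups) (row_mx D2 D3).
Let W := block_mx Y 0 0 (1%:M : 'M[C]_m).

Lemma coupling_gram : M1 *m adjmx M1 = M2 *m adjmx M2.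
Proof.
have Q_herm : adjmx Q = Q by rewrite -Ups_sqrt adjmxM Ups_herm.
rewrite /M1 /M2 !adjmx_block !adjmx_row !mulmx_block !mul_row_col !adjmx0.
rewrite !mulmx0 !mul0mx ?add0r ?addr0 !adjmxM Ups_herm !mulmxA Ups_sqrt.
rewrite -(mulmxA A) -(mulmxA Cm) Ups_sqrt.
have BD := subr2_eq_addr stein_BD.
congr block_mx.
- by rewrite (subr2_eq_addr stein_BB) addrA subrKC.
- exact: BD.
- move: BD => /(congr1 (@adjmx _ _ _)).
  by rewrite !adjmxD !adjmxM !adjmxK Q_herm !mulmxA.
- exact: subr2_eq_addr stein_DD.
Qed.

Hypothesis obs_gramY : obs_gramian Cm A Y.
Hypothesis Mp_pinv : moore_penrose
  (block_mx (Ups *m Y *m Ups) (Ups *m Y *m B1)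
            (adjmx B1 *m Y *m Ups) (adjmx D1 *m D1 + adjmx B1 *m Y *m B1)) Mp.

Definition coupling : 'M[C]_(n + p, n + (q + r)) :=
  Mp *m block_mx (Ups *m Y *m A *m Ups)
                 (row_mx (Ups *m Y *m B2) (Ups *m Y *m B3))
                 (adjmx D1 *m Cm *m Ups + adjmx B1 *m Y *m A *m Ups)
                 (row_mx (adjmx D1 *m D2 + adjmx B1 *m Y *m B2)
                         (adjmx D1 *m D3 + adjmx B1 *m Y *m B3)).

Lemma adjM1_W_M1 : adjmx M1 *m W *m M1 =
  block_mx (Ups *m Y *m Ups) (Ups *m Y *m B1)
           (adjmx B1 *m Y *m Ups) (adjmx D1 *m D1 + adjmx B1 *m Y *m B1).
Proof.
rewrite /M1 /W adjmx_block adjmx0 !mulmx_block !mulmx0 !mul0mx ?add0r ?addr0.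
by rewrite mulmx1 Ups_herm mul0mx addr0 addrC.
Qed.

Lemma coupling_lurking : coupling = lurking_isometry M1 M2 W Mp.
Proof.
rewrite /lurking_isometry /M1 /M2 /W adjmx_block adjmx0 !mulmx_block.
rewrite !mulmx0 !mul0mx ?add0r ?addr0 mulmx1 Ups_herm !mul0mx !addr0.
rewrite !mul_mx_row add_row_mx !mulmxA.
by congr (_ *m block_mx _ _ _ _); [rewrite addrC | congr row_mx; rewrite addrC].
Qed.

Lemma coupling_partial_isometry : partial_isometry coupling.
Proof.
rewrite coupling_lurking; apply: lurking_isometry_partial coupling_gram _ _.
  exact: obs_gramian_block_definite obs_gramY.
by rewrite adjM1_W_M1.
Qed.

Lemma coupling_solution : M1 *m coupling = M2.
Proof.
rewrite coupling_lurking; apply: lurking_isometry_solution coupling_gram _ _.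
  exact: obs_gramian_block_definite obs_gramY.
by rewrite adjM1_W_M1.
Qed.

Lemma coupling_blocks : let U := coupling in
  (Ups *m ulsubmx U + B1 *m dlsubmx U = A *m Ups /\
   D1 *m dlsubmx U = Cm *m Ups) /\
  [/\ Ups *m lsubmx (ursubmx U) + B1 *m lsubmx (drsubmx U) = B2,
      D1 *m lsubmx (drsubmx U) = D2,
      Ups *m rsubmx (ursubmx U) + B1 *m rsubmx (drsubmx U) = B3 &
      D1 *m rsubmx (drsubmx U) = D3].
Proof.
move=> U; have := coupling_solution; rewrite -/U -[U]submxK.
rewrite -[ursubmx U]hsubmxK -[drsubmx U]hsubmxK /M1 /M2 mulmx_block.
rewrite !mul0mx !add0r !mul_mx_row !add_row_mx.
case/eq_block_mx => eqA /eq_row_mx [eqB2 eqB3] eqC /eq_row_mx [eqD2 eqD3].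
by rewrite !block_mxKul !block_mxKur !block_mxKdl !block_mxKdr
  !row_mxKl !row_mxKr.
Qed.

Lemma coupling_kernel (x : 'cV[C]_n) :
  Ups *m x = 0 -> coupling *m col_mx x 0 = 0.
Proof.
move=> Upsx0; rewrite coupling_lurking.
apply: lurking_isometry_kernel; first by rewrite adjM1_W_M1.
rewrite -coupling_lurking mulmxA coupling_solution /M2 mul_block_col.
by rewrite !mulmx0 !addr0 -!mulmxA Upsx0 !mulmx0 col_mx0.
Qed.

Lemma coupling_unitmx : stable_mx A ->
  forall z, `|z| <= 1 -> (1%:M - z *: ulsubmx coupling) \in unitmx.
Proof.
move=> stA z; apply: (unitmx_ulsubmx (B := B1)) stA _ _ coupling_kernel.
  exact/contraction_partial_isometry/coupling_partial_isometry.
by have [[]] := coupling_blocks.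
Qed.

End Coupling.

Local Open Scope complex_scope.

Theorem theorem1p2 (R : realType) (m p q r n : nat)
  (A : 'M[R[i]]_n) (Cm : 'M[R[i]]_(m, n))
  (B1 : 'M[R[i]]_(n, p)) (B2 : 'M[R[i]]_(n, q)) (B3 : 'M[R[i]]_(n, r))
  (D1 : 'M[R[i]]_(m, p)) (D2 : 'M[R[i]]_(m, q)) (D3 : 'M[R[i]]_(m, r))
  (P1 P2 P3 Y Ups : 'M[R[i]]_n) (Mp : 'M[R[i]]_(n + p)) :
  (* A stable, and the realization of [G K] is minimal *)
  stable_mx A ->
  observable Cm A -> controllable A (row_mx B1 B2) ->
  (* Gramians *)
  ctrl_gramian A B1 P1 -> ctrl_gramian A B2 P2 -> ctrl_gramian A B3 P3 ->
  obs_gramian Cm A Y ->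
  (* T_G T_G^* - T_K T_K^* - T_F T_F^* = W_obs (P3 + P2 - P1) W_obs^* *)
  (forall i j : nat,
      toep_gram_block (markov D1 Cm A B1) i j
    - toep_gram_block (markov D2 Cm A B2) i j
    - toep_gram_block (markov D3 Cm A B3) i j
    = Cm *m A ^+ i *m (P3 + P2 - P1) *m (adjmx A) ^+ j *m adjmx Cm) ->
  psdmx (P3 + P2 - P1) ->
  (* Ups = (P3 + P2 - P1)^{1/2} *)
  psdmx Ups -> Ups *m Ups = P3 + P2 - P1 ->
  (* Mp = Moore-Penrose inverse of the first block matrix *)
  moore_penrose
    (block_mx (Ups *m Y *m Ups) (Ups *m Y *m B1)
              (adjmx B1 *m Y *m Ups) (adjmx D1 *m D1 + adjmx B1 *m Y *m B1)) Mp ->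
  let U : 'M[R[i]]_(n + p, n + (q + r)) :=
    Mp *m block_mx (Ups *m Y *m A *m Ups)
                   (row_mx (Ups *m Y *m B2) (Ups *m Y *m B3))
                   (adjmx D1 *m Cm *m Ups + adjmx B1 *m Y *m A *m Ups)
                   (row_mx (adjmx D1 *m D2 + adjmx B1 *m Y *m B2)
                           (adjmx D1 *m D3 + adjmx B1 *m Y *m B3)) in
  let alpha := ulsubmx U in
  let beta1 := lsubmx (ursubmx U) in
  let beta2 := rsubmx (ursubmx U) in
  let gamma := dlsubmx U in
  let delta1 := lsubmx (drsubmx U) in
  let delta2 := rsubmx (drsubmx U) in
  let G := realize D1 Cm A B1 in
  let K := realize D2 Cm A B2 in
  let F := realize D3 Cm A B3 in
  let X := realize delta1 gamma alpha beta1 in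
  let Psi := realize delta2 gamma alpha beta2 in
  let dom := fun z : R[i] => (1%:M - z *: alpha) \in unitmx in
  partial_isometry U /\
  (stable_rational dom X /\
   (forall z : R[i], `|z| < 1 -> G z *m X z = K z) /\
   (forall z : R[i], `|z| < 1 -> contraction (X z))) /\
  (stable_rational dom Psi /\
   (forall z : R[i], `|z| < 1 -> contraction (Psi z)) /\
   (forall z : R[i], `|z| < 1 -> G z *m Psi z = F z)).
Proof.
move=> stA obsCA _ _ _ _ gramY toep _ [Ups_herm _] Ups_sqrt Mp_pinv U.
move=> alpha beta1 beta2 gamma delta1 delta2 G K F X Psi dom.
have [[eqA eqC] [eqB2 eqD2 eqB3 eqD3]] :=
  coupling_blocks obsCA toep Ups_herm Ups_sqrt gramY Mp_pinv.
have unit_a := coupling_unitmx obsCA toep Ups_herm Ups_sqrt gramY Mp_pinv stA.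
have isoU := coupling_partial_isometry obsCA toep Ups_herm Ups_sqrt gramY Mp_pinv.
have cU : contraction
    (block_mx alpha (row_mx beta1 beta2) gamma (row_mx delta1 delta2)).
  by rewrite !hsubmxK submxK; apply: contraction_partial_isometry.
have [ratX GX cX] := realize_solution stA (contraction_block_rowl cU) unit_a
  eqA eqB2 eqC eqD2.
have [ratP GP cP] := realize_solution stA (contraction_block_rowr cU) unit_a
  eqA eqB3 eqC eqD3.
by split; [exact: isoU | split; split].
Qed.
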